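(* There is an absolute constant $c>0$ such that for every integer $d \geq 4$ and every positive integer $k \leq d$, there exists a set $\mathcal{H}$ of hyperplanes in $\mathbb{R}^d$ with $$\operatorname{vcdim}\left(\Delta_k(\mathcal{H})\right) \geq c\, d\, k \log k,$$ i.e. $\operatorname{vcdim}(\Delta_k(\mathcal{H})) = \Omega(d \cdot k\log k)$.
   Context: For a set $\mathcal{H}$ of hyperplanes in $\mathbb{R}^d$ and an integer $1 \le k \le d$, define the set system on ground set $\mathcal{H}$ $$\Delta_k(\mathcal{H}) = \{ H \subseteq \mathcal{H} : \text{there is an open } k\text{-dimensional simplex } \Delta \text{ in } \mathbb{R}^d \text{ such that } H = \{h \in \mathcal{H} : h \cap \Delta \neq \emptyset\}\},$$ where an open $k$-dimensional simplex is the relative interior of the convex hull of $k+1$ affinely independent points of $\mathbb{R}^d$. For a set system $(X,\mathcal{R})$ and $Y \subseteq X$, $\mathcal{R}$ shatters $Y$ if $\{Y \cap R : R \in \mathcal{R}\}$ is the full power set of $Y$; $\operatorname{vcdim}(\mathcal{R})$ is the largest size of a subset of $X$ shattered by $\mathcal{R}$. Logarithms are base 2. *)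

From HB Require Import structures.
From mathcomp Require Import all_boot all_order all_algebra.
From mathcomp Require Import all_classical all_reals all_analysis.
From mathcomp Require Import Rstruct Rstruct_topology.
Set Implicit Arguments. Unset Strict Implicit. Unset Printing Implicit Defensive.
Import Order.TTheory GRing.Theory Num.Theory.
Import numFieldNormedType.Exports.
Local Open Scope classical_set_scope.
Local Open Scope ring_scope.

Notation R := Rdefinitions.R.
Notation pt d := 'rV[R]_d.

Definition is_hyperplane (d : nat) (h : set (pt d)) : Prop :=
  exists (a : pt d) (b : Rdefinitions.R), a != 0 /\
    h = [set x : pt d | \sum_(j < d) a 0 j * x 0 j = b].

Definition affine_hull (d : nat) (S : set (pt d)) : set (pt d) :=
  [set x | exists (n : nat) (q : 'I_n -> pt d) (l : 'I_n -> R),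
     (forall i, S (q i)) /\ \sum_(i < n) l i = 1 /\
     x = \sum_(i < n) l i *: q i].

Definition convex_hull (d : nat) (S : set (pt d)) : set (pt d) :=
  [set x | exists (n : nat) (q : 'I_n -> pt d) (l : 'I_n -> R),
     (forall i, S (q i)) /\ (forall i, 0 <= l i) /\ \sum_(i < n) l i = 1 /\
     x = \sum_(i < n) l i *: q i].

(* Relative interior: interior relative to the affine hull
   (norm on 'rV[R]_d is MathComp-Analysis' matrix norm; all norms are equivalent). *)
Definition rel_interior (d : nat) (C : set (pt d)) : set (pt d) :=
  [set x | C x /\ exists e : R, 0 < e /\
     forall y, affine_hull C y -> `|y - x| < e -> C y].

Definition aff_indep (d k : nat) (p : 'I_k.+1 -> pt d) : Prop :=
  forall l : 'I_k.+1 -> R, \sum_(i < k.+1) l i = 0 ->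
    \sum_(i < k.+1) l i *: p i = 0 -> forall i, l i = 0.

Definition open_simplex (d k : nat) (p : 'I_k.+1 -> pt d) : set (pt d) :=
  rel_interior (convex_hull (range p)).

Definition Delta (d k : nat) (H : set (set (pt d))) : set (set (set (pt d))) :=
  [set Hs | exists p : 'I_k.+1 -> pt d, aff_indep p /\
     Hs = [set h | H h /\ h `&` open_simplex p !=set0]].

Definition shatters (T : Type) (F : set (set T)) (Y : set T) : Prop :=
  forall Z, Z `<=` Y -> exists2 A, F A & Y `&` A = Z.

Definition vcdim_ge (T : Type) (X : set T) (F : set (set T)) (x : R) : Prop :=
  exists (m : nat) (f : 'I_m -> T), injective f /\ (forall i, X (f i)) /\
    shatters F (range f) /\ x <= m%:R.

Definition log2 (x : R) : R := ln x / ln 2.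

From HB Require Import structures.
From mathcomp Require Import all_boot all_order all_algebra.
From mathcomp Require Import all_classical all_reals all_analysis.
From mathcomp Require Import Rstruct Rstruct_topology.
From mathcomp.algebra_tactics Require Import ring lra.
From mathcomp Require Import zify.
Set Implicit Arguments. Unset Strict Implicit. Unset Printing Implicit Defensive.
Import Order.TTheory GRing.Theory Num.Theory.
Import numFieldNormedType.Exports.
Local Open Scope classical_set_scope.
Local Open Scope ring_scope.

(* The hyperplanes are h_(g,j) = {x | <u_(g,j), x> = 1} for g < m = r q and j < L, where
   u_(g,j) is the moment vector (1, g, ..., g^(2r)) followed by the j-th unit vector of an
   L-block.  Given a target set Z of pairs, group the g by their fibres {j | (g,j) \in Z},
   cut each class with nonempty fibre P into chunks C of at most r points, and take the
   point y_(P,C) whose moment coordinates are the coefficients of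
   3/2 - prod_(a in C) (X - a)^2 and whose L-block is -1 off P.  Then
   <u_(g,j), y_(P,C)> = 3/2 - prod_(a in C) (g - a)^2 - [j \notin P] exceeds 1 iff g \in C
   and j \in P, and never equals 1.  These at most q + 2^L - 1 points, with the origin and
   a padding by unit vectors on fresh coordinates, span an affinely independent k-simplex
   whose other vertices lie below every h_(g,j).  A hyperplane avoiding the vertices meets
   an open simplex iff it separates two vertices, so this simplex meets exactly the h_(g,j)
   with (g,j) \in Z.  Taking r ~ d/8, q ~ k/4 and 2^L ~ q shatters m L = Omega(d k log k)
   hyperplanes. *)

Lemma mx_entry_le_norm (K : realDomainType) m n (A : 'M[K]_(m, n)) i j : `|A i j| <= `|A|.
Proof.
by rewrite [leRHS]/Num.Def.normr /= mx_normrE; apply/bigmax_geP; right; exists (i, j).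
Qed.

Lemma finite_pos_lower_bound (K : numFieldType) (I : finType) (F : I -> K) :
  (forall i, 0 < F i) -> exists2 e, 0 < e & forall i, e <= F i.
Proof.
move=> F_gt0; have inv_ge0 i : 0 <= (F i)^-1 by rewrite invr_ge0 ltW.
have S_ge0 : 0 <= \sum_i (F i)^-1 by apply: sumr_ge0.
exists (1 + \sum_i (F i)^-1)^-1; first by rewrite invr_gt0 ltr_wpDr.
move=> i; rewrite -[F i]invrK lef_pV2 ?posrE ?invr_gt0 ?ltr_wpDr //.
by rewrite (bigD1 i) //= addrCA lerDl addr_ge0 ?sumr_ge0.
Qed.

Definition dotv d (u x : pt d) : R := \sum_(t < d) u 0 t * x 0 t.

Definition hyp d (u : pt d) : set (pt d) := [set x | dotv u x = 1].

Lemma hyp_is_hyperplane d (u : pt d) : u != 0 -> is_hyperplane (hyp u).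
Proof. by move=> u0; exists u, 1. Qed.

Lemma dotvDr d (u x y : pt d) : dotv u (x + y) = dotv u x + dotv u y.
Proof. by rewrite /dotv -big_split; apply: eq_bigr => t _; rewrite mxE mulrDr. Qed.

Lemma dotvNr d (u x : pt d) : dotv u (- x) = - dotv u x.
Proof. by rewrite /dotv -sumrN; apply: eq_bigr => t _; rewrite mxE mulrN. Qed.

Lemma dotv0r d (u : pt d) : dotv u 0 = 0.
Proof. by rewrite /dotv big1 // => t _; rewrite mxE mulr0. Qed.

Lemma dotvC d (u x : pt d) : dotv u x = dotv x u.
Proof. by apply: eq_bigr => t _; rewrite mulrC. Qed.

Lemma dotv_sumr d n (u : pt d) (l : 'I_n -> R) (q : 'I_n -> pt d) :
  dotv u (\sum_(i < n) l i *: q i) = \sum_(i < n) l i * dotv u (q i).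
Proof.
rewrite /dotv; under eq_bigr => t _ do rewrite summxE big_distrr /=.
rewrite exchange_big /=; apply: eq_bigr => i _; rewrite big_distrr /=.
by apply: eq_bigr => t _; rewrite mxE mulrCA.
Qed.

Definition affine_comb d k (p : 'I_k.+1 -> pt d) : set (pt d) :=
  [set x | exists mu : 'I_k.+1 -> R, \sum_i mu i = 1 /\ x = \sum_i mu i *: p i].

Lemma affine_hull_sub_affine_comb d k (p : 'I_k.+1 -> pt d) (S : set (pt d)) :
  S `<=` affine_comb p -> affine_hull S `<=` affine_comb p.
Proof.
move=> Sp _ [n [q [l [qS [l1 ->]]]]].
have /choice [mu mu_q] : forall i, exists mu : 'I_k.+1 -> R,
    \sum_j mu j = 1 /\ q i = \sum_j mu j *: p j by move=> i; exact: Sp.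
exists (fun j => \sum_i l i * mu i j); split.
  rewrite exchange_big /= -l1; apply: eq_bigr => i _.
  by rewrite -big_distrr /= (proj1 (mu_q i)) mulr1.
under [RHS]eq_bigr => j _ do rewrite scaler_suml.
rewrite exchange_big /=; apply: eq_bigr => i _.
by rewrite (proj2 (mu_q i)) scaler_sumr; apply: eq_bigr => j _; rewrite scalerA.
Qed.

Lemma convex_hull_sub_affine_hull d (S : set (pt d)) : convex_hull S `<=` affine_hull S.
Proof. by move=> x [n [q [l [? [? [? ->]]]]]]; exists n, q, l. Qed.

Lemma affine_hull_simplex d k (p : 'I_k.+1 -> pt d) :
  affine_hull (convex_hull (range p)) `<=` affine_comb p.
Proof.
apply/affine_hull_sub_affine_comb => x /convex_hull_sub_affine_hull.
apply: affine_hull_sub_affine_comb => _ [i _ <-].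
exists (fun j => (j == i)%:R); split.
  by rewrite (bigD1 i) //= eqxx big1 ?addr0 // => j /negbTE ->.
rewrite (bigD1 i) //= eqxx scale1r big1 ?addr0 // => j /negbTE ->.
by rewrite scale0r.
Qed.

Lemma aff_indep_coord_map d k (p : 'I_k.+1 -> pt d) : aff_indep p ->
  exists B : 'M[R]_(d + 1, k.+1), forall mu : 'I_k.+1 -> R,
    \row_i mu i = row_mx (\sum_i mu i *: p i) (\sum_i mu i)%:M *m B.
Proof.
move=> p_indep.
pose A : 'M[R]_(k.+1, d + 1) := row_mx (\matrix_i p i) (const_mx 1).
have mulA (mu : 'I_k.+1 -> R) :
    \row_i mu i *m A = row_mx (\sum_i mu i *: p i) (\sum_i mu i)%:M.
  rewrite mul_mx_row !mulmx_sum_row; congr row_mx.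
    by apply: eq_bigr => i _; rewrite rowK mxE.
  apply/rowP => t; rewrite summxE (ord1 t) !mxE eqxx mulr1n.
  by apply: eq_bigr => i _; rewrite !mxE mulr1.
have : row_free A.
  apply/inj_row_free => v vA0; apply/rowP => i; rewrite mxE.
  have vE : v = \row_i v 0 i by apply/rowP => j; rewrite mxE.
  move: vA0; rewrite vE mulA => /eqP; rewrite row_mx_eq0 => /andP[/eqP pv0 /eqP].
  move/matrixP/(_ 0 0); rewrite !mxE eqxx mulr1n => v0.
  exact: p_indep v0 pv0 i.
case/row_freeP => B AB; exists B => mu.
by rewrite -mulA -mulmxA AB mulmx1.
Qed.

Lemma row_mulmx_entry_le (K : numDomainType) m n (v : 'rV[K]_m) (B : 'M[K]_(m, n)) c i :
  (forall t, `|v 0 t| <= c) -> `|(v *m B) 0 i| <= c * \sum_t `|B t i|.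
Proof.
move=> v_le; rewrite mxE big_distrr /=; apply: (le_trans (ler_norm_sum _ _ _)).
by apply: ler_sum => t _; rewrite normrM ler_wpM2r.
Qed.

Lemma aff_indep_coord_lipschitz d k (p : 'I_k.+1 -> pt d) : aff_indep p ->
  exists2 M, 0 < M & forall mu lam : 'I_k.+1 -> R,
    \sum_i mu i = 1 -> \sum_i lam i = 1 ->
    forall i, `|mu i - lam i| <= `|\sum_i mu i *: p i - \sum_i lam i *: p i| * M.
Proof.
case/aff_indep_coord_map => B coordB.
exists (1 + \sum_i \sum_t `|B t i|).
  by rewrite ltr_wpDr // !sumr_ge0 // => i _; rewrite sumr_ge0.
move=> mu lam mu1 lam1 i.
set x := \sum_i mu i *: p i; set y := \sum_i lam i *: p i.
have -> : mu i - lam i = (\row_j mu j - \row_j lam j) 0 i by rewrite !mxE.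
rewrite (coordB mu) (coordB lam) mu1 lam1 -mulmxBl opp_row_mx add_row_mx subrr.
apply: (le_trans (@row_mulmx_entry_le _ _ _ _ _ `|x - y| _ _)).
  move=> t; rewrite -(splitK t); case: (fintype.split t) => j /=.
    by rewrite row_mxEl mx_entry_le_norm.
  by rewrite row_mxEr mxE normr0.
rewrite ler_wpM2l // (bigD1 i) //= addrCA lerDl addr_ge0 //.
by rewrite !sumr_ge0 // => j _; rewrite sumr_ge0.
Qed.

Lemma open_simplex_pos_comb d k (p : 'I_k.+1 -> pt d) (lam : 'I_k.+1 -> R) :
  aff_indep p -> (forall i, 0 < lam i) -> \sum_i lam i = 1 ->
  open_simplex p (\sum_i lam i *: p i).
Proof.
move=> p_indep lam_gt0 lam1; have [M M_gt0 coord_le] := aff_indep_coord_lipschitz p_indep.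
have [e e_gt0 e_le] := finite_pos_lower_bound lam_gt0.
split; first by exists k.+1, p, lam; split => //; split => // i; exact: ltW.
exists (e / M); split => [|y /affine_hull_simplex [mu [mu1 ->]] near_y].
  by rewrite divr_gt0.
exists k.+1, p, mu; split => //; split => // i.
have := coord_le _ _ mu1 lam1 i; rewrite ltr_pdivlMr // in near_y.
have := e_le i; rewrite ler_distl; lra.
Qed.

Lemma dotv_lt1_convex_hull d (u : pt d) (S : set (pt d)) x :
  (forall y, S y -> dotv u y < 1) -> convex_hull S x -> dotv u x < 1.
Proof.
move=> S_lt1 [n [q [l [qS [l_ge0 [l1 ->]]]]]].
have gap_gt0 i : 0 < 1 - dotv u (q i) by rewrite subr_gt0; exact: S_lt1.
have [e e_gt0 e_le] := finite_pos_lower_bound gap_gt0.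
rewrite dotv_sumr; apply: (@le_lt_trans _ _ (\sum_i l i * (1 - e))).
  by apply: ler_sum => i _; rewrite ler_wpM2l // lerBrDl -lerBrDr.
by rewrite -mulr_suml l1 mul1r ltrBlDr ltrDl.
Qed.

Lemma hyp_meets_open_simplex d k (p : 'I_k.+1 -> pt d) (u : pt d) : aff_indep p ->
  (forall i, dotv u (p i) != 1) -> (exists i, 1 < dotv u (p i)) ->
  (exists i, dotv u (p i) < 1) -> hyp u `&` open_simplex p !=set0.
Proof.
move=> p_indep p_off [i1 gt1] [i2 lt1].
pose f i := dotv u (p i) - 1.
have f_neg i : ~~ (0 < f i) -> f i < 0.
  by rewrite -leNgt le_eqVlt subr_eq0 (negbTE (p_off i)).
pose Spos := \sum_(i | 0 < f i) f i; pose Sneg := - \sum_(i | ~~ (0 < f i)) f i.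
have Spos_gt0 : 0 < Spos.
  have f1 : 0 < f i1 by rewrite subr_gt0.
  rewrite /Spos (bigD1 i1) //= ltr_wpDr // sumr_ge0 // => i /andP[+ _]; exact: ltW.
have Sneg_gt0 : 0 < Sneg.
  have f2 : ~~ (0 < f i2) by rewrite -leNgt subr_le0 ltW.
  rewrite /Sneg (bigD1 i2) //= opprD ltr_wpDr ?oppr_gt0 ?f_neg //.
  rewrite oppr_ge0 sumr_le0 // => i /andP[/f_neg + _]; exact: ltW.
(* Weighting each side by the total mass of the other side balances [f]. *)
pose w i := if 0 < f i then Sneg else Spos.
have w_gt0 i : 0 < w i by rewrite /w; case: ifP.
have wf0 : \sum_i w i * f i = 0.
  rewrite (bigID (fun i => 0 < f i)) /=.
  under eq_bigr => i fi do rewrite /w fi.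
  under [X in _ + X]eq_bigr => i /negbTE fi do rewrite /w fi.
  by rewrite -!big_distrr /= -/Spos /Sneg; ring.
pose W := \sum_i w i.
have W_gt0 : 0 < W by rewrite /W (bigD1 ord0) //= ltr_wpDr // sumr_ge0 // => i _; exact: ltW.
exists (\sum_i (w i / W) *: p i); split; last first.
  apply: open_simplex_pos_comb => // [i|]; first by rewrite divr_gt0.
  by rewrite -mulr_suml divff // gt_eqF.
rewrite /hyp /= dotv_sumr.
have -> : \sum_i w i / W * dotv u (p i) = (\sum_i w i * f i) / W + W / W.
  rewrite !mulr_suml -big_split /=; apply: eq_bigr => i _; rewrite /f; field.
  by rewrite gt_eqF.
by rewrite wf0 mul0r add0r divff // gt_eqF.
Qed.

Lemma hyp_meets_open_simplexP d k (p : 'I_k.+1 -> pt d) (u : pt d) : aff_indep p ->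
  (forall i, dotv u (p i) != 1) -> (exists i, dotv u (p i) < 1) ->
  hyp u `&` open_simplex p !=set0 <-> exists i, 1 < dotv u (p i).
Proof.
move=> p_indep p_off below; split; last by move=> above; exact: hyp_meets_open_simplex.
move=> [x [ux [x_hull _]]]; apply: contrapT => no_above.
suff : dotv u x < 1 by rewrite ux ltxx.
apply: dotv_lt1_convex_hull x_hull => _ [i _ <-].
rewrite lt_neqAle p_off leNgt; apply/negP => above; apply: no_above; by exists i.
Qed.

Definition ev d (t : nat) : pt d := \row_(j < d) ((j : nat) == t)%:R.

Lemma dotv_ev_vanish d t (x : pt d) :
  (forall j : 'I_d, j = t :> nat -> x 0 j = 0) -> dotv (ev d t) x = 0.
Proof.
move=> x_t; rewrite /dotv big1 // => j _; rewrite mxE.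
by case: eqP => [/x_t -> | _]; rewrite ?mulr0 ?mul0r.
Qed.

Lemma dotv_ev_neq d t t' : t != t' -> dotv (ev d t) (ev d t') = 0.
Proof.
move=> tt'; apply: dotv_ev_vanish => j jt; rewrite mxE jt.
by rewrite (negbTE tt').
Qed.

Lemma dotv_evv d t : (t < d)%N -> dotv (ev d t) (ev d t) = 1.
Proof.
move=> t_lt; rewrite /dotv (bigD1 (Ordinal t_lt)) //= !mxE eqxx mulr1 big1 ?addr0 //.
move=> j jt; rewrite !mxE; suff /negbTE -> : (j : nat) != t by rewrite mulr0.
by apply: contraNneq jt => jt; apply/eqP/val_inj.
Qed.

Lemma dotv_ev_ge0 d t (x : pt d) : (forall j, 0 <= x 0 j) -> 0 <= dotv (ev d t) x.
Proof. by move=> x_ge0; rewrite sumr_ge0 // => j _; rewrite mxE mulr_ge0. Qed.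

Lemma free_of_triangular_duals d k (v w : 'I_k -> pt d) :
  (forall i, dotv (w i) (v i) != 0) ->
  (forall i j : 'I_k, (i < j)%N -> dotv (w i) (v j) = 0) ->
  forall l : 'I_k -> R, \sum_i l i *: v i = 0 -> forall i, l i = 0.
Proof.
move=> diag upper l lv0.
suff l_lt n : forall i : 'I_k, (i < n)%N -> l i = 0 by move=> i; exact: l_lt (ltn_ord i).
elim: n => [|n IH] i // i_lt; case: (ltnP i n) => [/IH // | n_le_i].
have := congr1 (dotv (w i)) lv0; rewrite dotv_sumr dotv0r (bigD1 i) //= big1 ?addr0.
  by move/eqP; rewrite mulf_eq0 (negbTE (diag i)) orbF => /eqP.
move=> j ji; case: (ltngtP j i) => [j_lt | i_lt_j | /val_inj ij].
- by rewrite IH ?mul0r //; lia.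
- by rewrite upper ?mulr0.
- by rewrite ij eqxx in ji.
Qed.

Definition origin_simplex d k (v : 'I_k -> pt d) : 'I_k.+1 -> pt d :=
  fun i => if unlift ord0 i is Some j then v j else 0.

Lemma aff_indep_origin_simplex d k (v : 'I_k -> pt d) :
  (forall l : 'I_k -> R, \sum_i l i *: v i = 0 -> forall i, l i = 0) ->
  aff_indep (origin_simplex v).
Proof.
move=> v_free l l0 lv0.
have l_lift j : l (lift ord0 j) = 0.
  apply: (v_free (fun j => l (lift ord0 j))).
  move: lv0; rewrite big_ord_recl /origin_simplex unlift_none scaler0 add0r.
  by under eq_bigr => i _ do rewrite liftK.
move=> i; case: (unliftP ord0 i) => [j -> | ->]; first exact: l_lift.
by move: l0; rewrite big_ord_recl big1 ?addr0 // => j _; exact: l_lift.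
Qed.

Section PaddedSimplex.
Variables (d k D : nat) (ys : seq (pt d)).
Hypothesis k_le_d : (k <= d)%N.
Hypothesis size_ys_le : (size ys <= k)%N.
Hypothesis D_size_ys_le : (D + size ys <= d)%N.
Hypothesis ys_vanish : forall y, y \in ys -> forall t : 'I_d, (D <= t)%N -> y 0 t = 0.

(* Each [y_i] is lifted along a private coordinate beyond the common support [< D], which
   makes the vertices triangular; the [- e_t] only fill up the dimension, and they stay
   below every hyperplane with a nonnegative normal. *)
Definition padded_vertex (i : nat) : pt d :=
  if (i < size ys)%N then nth 0 ys i + ev d (d - size ys + i)
  else - ev d (i - size ys).

Definition padded_simplex : 'I_k.+1 -> pt d :=
  origin_simplex (fun i : 'I_k => padded_vertex i).

Lemma padded_simplex_aff_indep : aff_indep padded_simplex.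
Proof.
apply: aff_indep_origin_simplex.
pose c (i : nat) := if (i < size ys)%N then (d - size ys + i)%N else (i - size ys)%N.
apply: (@free_of_triangular_duals _ _ _ (fun i => ev d (c i))) => [i | i j ij];
  rewrite /padded_vertex /c; have := ltn_ord i.
- case: ifP => i_lt i_lt_k.
    rewrite dotvDr dotv_evv; last by lia.
    rewrite dotv_ev_vanish ?add0r ?oner_neq0 // => t t_eq.
    by apply: ys_vanish; [exact: mem_nth | lia].
  by rewrite dotvNr dotv_evv ?oppr_eq0 ?oner_neq0 //; lia.
- have := ltn_ord j; case: ifP => j_lt j_lt_k; case: ifP => i_lt i_lt_k; try lia.
  + rewrite dotvDr dotv_ev_neq ?addr0; last by apply/eqP; lia.
    by apply: dotv_ev_vanish => t t_eq; apply: ys_vanish; [exact: mem_nth | lia].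
  + by rewrite dotvNr dotv_ev_neq ?oppr0 //; apply/eqP; lia.
  + by rewrite dotvNr dotv_ev_neq ?oppr0 //; apply/eqP; lia.
Qed.

Lemma hyp_meets_padded_simplexP (u : pt d) :
  (forall t, 0 <= u 0 t) -> (forall t : 'I_d, (D <= t)%N -> u 0 t = 0) ->
  (forall y, y \in ys -> dotv u y != 1) ->
  hyp u `&` open_simplex padded_simplex !=set0 <-> exists2 y, y \in ys & 1 < dotv u y.
Proof.
move=> u_ge0 u_vanish ys_off.
have vertex0 : dotv u (padded_simplex ord0) = 0.
  by rewrite /padded_simplex /origin_simplex unlift_none dotv0r.
have vertexS (j : 'I_k) : dotv u (padded_simplex (lift ord0 j)) =
    if (j < size ys)%N then dotv u (nth 0 ys j) else - dotv (ev d (j - size ys)) u.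
  rewrite /padded_simplex /origin_simplex liftK /padded_vertex.
  case: ifP => j_lt; last by rewrite dotvNr dotvC.
  rewrite dotvDr [dotv u (ev _ _)]dotvC dotv_ev_vanish ?addr0 // => t t_eq.
  by apply: u_vanish; lia.
have padding_le0 t : - dotv (ev d t) u <= 0 by rewrite oppr_le0 dotv_ev_ge0.
rewrite hyp_meets_open_simplexP; last by exists ord0; rewrite vertex0 ltr01.
- split => [[i] | [y y_in above]].
    case: (unliftP ord0 i) => [j -> | ->]; last by rewrite vertex0 ltr10.
    rewrite vertexS; case: ifP => j_lt above; first by exists (nth 0 ys j) => //; exact: mem_nth.
    by have := padding_le0 (j - size ys)%N; lra.
  have [j j_lt nth_j] := nthP 0 y_in; have j_lt_k := leq_trans j_lt size_ys_le.
  by exists (lift ord0 (Ordinal j_lt_k)); rewrite vertexS /= j_lt nth_j.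
- exact: padded_simplex_aff_indep.
- move=> i; case: (unliftP ord0 i) => [j -> | ->]; last by rewrite vertex0 eq_sym oner_neq0.
  rewrite vertexS; case: ifP => j_lt; first by apply: ys_off; rewrite mem_nth.
  by apply/eqP => eq1; have := padding_le0 (j - size ys)%N; lra.
Qed.

End PaddedSimplex.

Definition vcdim_hyperplanes_ge d k (x : R) : Prop :=
  exists H : set (set (pt d)), (forall h, H h -> is_hyperplane h) /\ vcdim_ge H (Delta k H) x.

Lemma vcdim_hyperplanes_ge_le d k (x y : R) :
  y <= x -> vcdim_hyperplanes_ge d k x -> vcdim_hyperplanes_ge d k y.
Proof.
move=> yx [H [H_hyp [m [f [f_inj [f_H [f_shattered x_le]]]]]]].
by exists H; split => //; exists m, f; do !split => //; exact: le_trans x_le.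
Qed.

Lemma vcdim_hyperplanes_ge_card d k (I : finType) (U : I -> pt d) :
  (forall n, U n != 0) ->
  (forall Z : set I, exists p : 'I_k.+1 -> pt d, aff_indep p /\
     forall n, hyp (U n) `&` open_simplex p !=set0 <-> Z n) ->
  vcdim_hyperplanes_ge d k #|I|%:R.
Proof.
move=> U_neq0 realizable; set H := range (fun n => hyp (U n)).
exists H; split; first by move=> _ [n _ <-]; exact: hyp_is_hyperplane.
exists #|I|, (fun i => hyp (U (enum_val i))); split; last split; last split => //.
- move=> i j eq_ij; apply: enum_val_inj.
  have [p [_ meets]] := realizable (fun n => n = enum_val j).
  by apply/(meets _).1; rewrite eq_ij; apply/(meets _).2.
- by move=> i; exists (enum_val i).
- move=> Z Z_sub; have [p [p_indep meets]] := realizable (fun n => Z (hyp (U n))).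
  exists [set h | H h /\ h `&` open_simplex p !=set0]; first by exists p.
  apply/seteqP; split => [_ [[i _ <-] [_ /(meets _).1 //]] | h Zh].
  have [i _ hi] := Z_sub h Zh; split; first by exists i.
  by rewrite -hi; split; [exists (enum_val i) | apply/(meets _).2; rewrite hi].
Qed.

Section Witnesses.
Variables (d k D : nat) (I : finType) (U : I -> pt d).
Hypothesis k_le_d : (k <= d)%N.
Hypothesis U_ge0 : forall n t, 0 <= U n 0 t.
Hypothesis U_vanish : forall n (t : 'I_d), (D <= t)%N -> U n 0 t = 0.

Definition witnesses (Z : set I) (ys : seq (pt d)) : Prop :=
  [/\ (size ys <= k)%N, (D + size ys <= d)%N,
      forall y, y \in ys -> forall t : 'I_d, (D <= t)%N -> y 0 t = 0,
      forall y n, y \in ys -> dotv (U n) y != 1 &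
      forall n, Z n <-> exists2 y, y \in ys & 1 < dotv (U n) y].

Lemma realizable_of_witnesses Z ys : witnesses Z ys ->
  exists p : 'I_k.+1 -> pt d, aff_indep p /\
    forall n, hyp (U n) `&` open_simplex p !=set0 <-> Z n.
Proof.
case=> size_le D_size_le ys_vanish ys_off Z_ys.
exists (@padded_simplex d k ys); split.
  exact: padded_simplex_aff_indep k_le_d size_le D_size_le ys_vanish.
move=> n; apply: iff_trans (iff_sym (Z_ys n)).
exact: (hyp_meets_padded_simplexP k_le_d size_le D_size_le ys_vanish
  (U_ge0 n) (U_vanish n) (fun y => ys_off y n)).
Qed.

Lemma vcdim_hyperplanes_ge_of_witnesses : (forall n, U n != 0) ->
  (forall Z, exists ys, witnesses Z ys) -> vcdim_hyperplanes_ge d k #|I|%:R.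
Proof.
move=> U_neq0 has_witnesses; apply: vcdim_hyperplanes_ge_card U_neq0 _ => Z.
by have [ys /realizable_of_witnesses] := has_witnesses Z.
Qed.

End Witnesses.

Definition chunks (T : Type) (r : nat) (s : seq T) : seq (seq T) :=
  reshape (nseq ((size s + r.-1) %/ r) r) s.

Lemma size_chunks (T : Type) r (s : seq T) : size (chunks r s) = ((size s + r.-1) %/ r)%N.
Proof. by rewrite size_reshape size_nseq. Qed.

Lemma size_chunk_le (T : eqType) r (s : seq T) ch : ch \in chunks r s -> (size ch <= r)%N.
Proof.
rewrite /chunks; move: (_ %/ r)%N => n; elim: n s => [|n IH] s //=.
by rewrite in_cons => /orP[/eqP -> | /IH //]; rewrite size_take_min geq_minl.
Qed.

Lemma flatten_chunks (T : Type) r (s : seq T) : (0 < r)%N -> flatten (chunks r s) = s.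
Proof.
move=> r_gt0; apply: reshapeKr; rewrite sumn_nseq.
have := divn_eq (size s + r.-1) r; have := ltn_pmod (size s + r.-1) r_gt0; nia.
Qed.

Lemma mem_chunks (T : eqType) r (s : seq T) x :
  (0 < r)%N -> (x \in s) = has (fun ch => x \in ch) (chunks r s).
Proof.
move=> r_gt0; rewrite -{1}(flatten_chunks s r_gt0).
by apply/flattenP/hasP => -[ch]; exists ch.
Qed.

Lemma ceil_divn_le a r : (0 < r)%N -> ((a + r.-1) %/ r <= a %/ r + 1)%N.
Proof.
move=> r_gt0; rewrite divnD // (divn_small (_ : r.-1 < r)%N) ?addn0; last by lia.
by rewrite leq_add2l leq_b1.
Qed.

Lemma sum_divn_le (I : Type) (s : seq I) (P : pred I) (f : I -> nat) r :
  (\sum_(i <- s | P i) (f i %/ r) <= (\sum_(i <- s | P i) f i) %/ r)%N.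
Proof.
have [-> | r_gt0] := posnP r; first by rewrite big1 // => i _; rewrite divn0.
elim/big_rec2: _ => // i x y _ x_le.
by rewrite divnD // -addnA leq_add2l (leq_trans x_le (leq_addr _ _)).
Qed.

Lemma sum_card_fibres_le (aT rT : finType) (f : aT -> rT) (A : {pred rT}) :
  (\sum_(y in A) #|[set x | f x == y]%SET| <= #|aT|)%N.
Proof.
apply: leq_trans (max_card [set x | f x \in A]%SET).
rewrite -sum1dep_card (partition_big f (mem A)) //=; apply: leq_sum => y y_A.
rewrite -sum1dep_card; apply/eq_leq/eq_bigl => x.
by case: eqP => [-> | _]; rewrite ?y_A ?andbF.
Qed.

Lemma sum_ord_indicator (K : pzSemiRingType) n a (c : K) :
  (a < n)%N -> \sum_(t < n) ((t : nat) == a)%:R * c = c.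
Proof.
move=> a_lt; rewrite (bigD1 (Ordinal a_lt)) //= eqxx mul1r big1 ?addr0 // => t t_neq.
suff /negbTE -> : (t : nat) != a by rewrite mul0r.
by apply: contraNneq t_neq => t_eq; apply/eqP/val_inj.
Qed.

Lemma natr_dist_ge1 (K : numDomainType) (x y : nat) : x != y -> 1 <= `|x%:R - y%:R : K|.
Proof.
case: ltngtP => // lt_xy _.
  by rewrite distrC -natrB ?(ltnW lt_xy) // normr_nat ler1n subn_gt0.
by rewrite -natrB ?(ltnW lt_xy) // normr_nat ler1n subn_gt0.
Qed.

Section MomentFamily.
Variables (d r L m : nat).

Definition moment_normal (n : 'I_m * 'I_L) : pt d :=
  \row_(t < d) if (t <= 2 * r)%N then (n.1 : nat)%:R ^+ t
               else ((t : nat) == 2 * r + 1 + n.2)%:R.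

Definition sqdist_poly (ch : seq 'I_m) : {poly R} :=
  (\prod_(a <- ch) ('X - (a : nat)%:R%:P)) ^+ 2.

Definition witness (P : {set 'I_L}) (ch : seq 'I_m) : pt d :=
  \row_(t < d) if (t <= 2 * r)%N then ((t : nat) == 0)%:R * (3 / 2) - (sqdist_poly ch)`_t
               else if (t < 2 * r + 1 + L)%N
                    then - ((t - (2 * r + 1))%N \notin [seq val j | j in P])%:R
                    else 0.

Lemma size_sqdist_poly ch : size (sqdist_poly ch) = (2 * size ch).+1.
Proof.
have p_neq0 : \prod_(a <- ch) ('X - (a : nat)%:R%:P) != 0 :> {poly R}.
  by rewrite monic_neq0 ?monic_prod_XsubC.
by rewrite /sqdist_poly expr2 size_mul // size_prod_XsubC; lia.
Qed.

Lemma sqdist_poly_root (g : 'I_m) ch : g \in ch -> (sqdist_poly ch).[(g : nat)%:R] = 0.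
Proof.
move=> g_in; rewrite horner_exp horner_prod (big_rem g) //=.
by rewrite hornerXsubC subrr mul0r expr0n.
Qed.

Lemma sqdist_poly_ge1 (g : 'I_m) ch : g \notin ch -> 1 <= (sqdist_poly ch).[(g : nat)%:R].
Proof.
move=> g_notin; rewrite horner_exp -[_ ^+ 2]ger0_norm ?sqr_ge0 // normrX exprn_ege1 //.
rewrite horner_prod normr_prod big_seq_cond.
apply: (big_ind (fun x => 1 <= x)) => // [x y|a /andP[a_in _]]; first exact: mulr_ege1.
rewrite hornerXsubC natr_dist_ge1 //; apply: contraNneq g_notin => ga.
by rewrite (val_inj ga).
Qed.

Lemma moment_normal_ge0 n t : 0 <= moment_normal n 0 t.
Proof. by rewrite mxE; case: ifP => _; rewrite ?exprn_ge0 ?ler0n. Qed.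

Lemma moment_normal_vanish n (t : 'I_d) : (2 * r + 1 + L <= t)%N -> moment_normal n 0 t = 0.
Proof.
move=> t_ge; rewrite mxE ifF; last by lia.
by have := ltn_ord n.2; case: eqP => //; lia.
Qed.

Lemma witness_vanish P ch (t : 'I_d) : (2 * r + 1 + L <= t)%N -> witness P ch 0 t = 0.
Proof. by move=> t_ge; rewrite mxE !ifF //; lia. Qed.

Hypothesis blocks_le_d : (2 * r + 1 + L <= d)%N.

Lemma dotv_moment_witness g j P ch : (size ch <= r)%N ->
  dotv (moment_normal (g, j)) (witness P ch) =
  3 / 2 - (sqdist_poly ch).[(g : nat)%:R] - (j \notin P)%:R.
Proof.
move=> size_ch; set Q := sqdist_poly ch; set x : R := (g : nat)%:R.
have size_Q : (size Q <= 2 * r + 1)%N by rewrite size_sqdist_poly; lia.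
pose A (t : nat) := if (t < 2 * r + 1)%N
  then x ^+ t * ((t == 0)%:R * (3 / 2) - Q`_t) else 0.
pose B (t : nat) : R := (t == 2 * r + 1 + j)%:R * - (j \notin P)%:R.
have entry (t : 'I_d) : moment_normal (g, j) 0 t * witness P ch 0 t = A t + B t.
  rewrite !mxE /A /B /=; case: (ltnP t (2 * r + 1)) => t_lt.
    have -> : (t <= 2 * r)%N by lia.
    have /eqP/negbTE -> : (t : nat) <> (2 * r + 1 + j)%N by lia.
    by rewrite mul0r addr0.
  have -> : (t <= 2 * r)%N = false by lia.
  rewrite add0r.
  case: (eqVneq (t : nat) (2 * r + 1 + j)) => [t_eq | t_neq]; last by rewrite !mul0r.
  rewrite ifT; last by have := ltn_ord j; lia.
  rewrite (_ : (t - _)%N = j); last by lia.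
  by rewrite (mem_map val_inj) mem_enum.
rewrite /dotv (eq_bigr _ (fun t _ => entry t)) big_split /=.
rewrite /B sum_ord_indicator; last by have := ltn_ord j; lia.
have a_le_d : (2 * r + 1 <= d)%N by lia.
rewrite -big_mkcond /= -(big_ord_widen _ (fun t => x ^+ t * ((t == 0)%:R * (3 / 2) - Q`_t)) a_le_d).
under eq_bigr => t _ do rewrite mulrBr.
rewrite sumrB (horner_coef_wide x size_Q) addn1 big_ord_recl /= expr0 !mul1r.
rewrite big1 => [|t _]; last by rewrite mul0r mulr0.
rewrite addr0; congr (_ - _ - _); apply: eq_bigr => t _; exact: mulrC.
Qed.

Lemma moment_witness_neq1 g j P ch : (size ch <= r)%N ->
  dotv (moment_normal (g, j)) (witness P ch) != 1.
Proof.
move=> size_ch; rewrite dotv_moment_witness //; case: (boolP (g \in ch)) => g_ch.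
  by rewrite sqdist_poly_root //; case: (j \in P) => /=; apply/eqP; lra.
by have := sqdist_poly_ge1 g_ch; case: (j \in P) => /= Q_ge1; apply/eqP; lra.
Qed.

Lemma moment_witness_gt1 g j P ch : (size ch <= r)%N ->
  1 < dotv (moment_normal (g, j)) (witness P ch) <-> g \in ch /\ j \in P.
Proof.
move=> size_ch; rewrite dotv_moment_witness //; case: (boolP (g \in ch)) => g_ch.
  rewrite sqdist_poly_root //; case: (j \in P) => /=; first by split => // _; lra.
  by split => [lt1|[]//]; exfalso; lra.
by have := sqdist_poly_ge1 g_ch; case: (j \in P) => /= Q_ge1; split => [lt1|[]//]; exfalso; lra.
Qed.

Lemma moment_normal_neq0 n : moment_normal n != 0.
Proof.
have d_gt0 : (0 < d)%N by lia.
by apply/eqP => /matrixP/(_ 0 (Ordinal d_gt0)); rewrite !mxE expr0 => /eqP; rewrite oner_eq0.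
Qed.

Section WitnessList.
Local Close Scope classical_set_scope.
Variable Z : set ('I_m * 'I_L).

Definition fibre (g : 'I_m) : {set 'I_L} := [set j | `[< Z (g, j) >]].

Definition fibre_class (P : {set 'I_L}) : seq 'I_m := enum [set g | fibre g == P].

Definition witness_list : seq (pt d) :=
  flatten [seq [seq witness P ch | ch <- chunks r (fibre_class P)]
          | P <- enum [set~ finset.set0]].

Lemma size_witness_list : (0 < r)%N -> (size witness_list <= m %/ r + (2 ^ L).-1)%N.
Proof.
move=> r_gt0; rewrite size_flatten /shape -map_comp sumnE big_map big_enum /=.
under eq_bigr => P _ do rewrite /= size_map size_chunks /fibre_class -cardE.
apply: (@leq_trans (\sum_(P in [set~ finset.set0]) (#|[set g | fibre g == P]| %/ r + 1))).
  by apply: leq_sum => P _; exact: ceil_divn_le.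
rewrite big_split /= sum1_card cardsC1 -cardsT -powersetT card_powerset cardsT card_ord.
rewrite leq_add2r (leq_trans (sum_divn_le _ _ _ _)) // leq_div2r //.
by rewrite -[m in (_ <= m)%N]card_ord sum_card_fibres_le.
Qed.


Lemma mem_witness_list y : y \in witness_list ->
  exists P ch, ch \in chunks r (fibre_class P) /\ y = witness P ch.
Proof.
by case/flatten_mapP => P _ /mapP[ch ch_in ->]; exists P, ch.
Qed.

Lemma witness_list_witnesses k : (0 < r)%N ->
  (m %/ r + (2 ^ L).-1 <= k)%N -> (2 * r + 1 + L + (m %/ r + (2 ^ L).-1) <= d)%N ->
  witnesses k (2 * r + 1 + L) moment_normal Z witness_list.
Proof.
move=> r_gt0 count_le_k count_le_d; have size_le := size_witness_list r_gt0.
split => [| | y | y n | [g j]].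
- exact: leq_trans size_le count_le_k.
- by apply: leq_trans count_le_d; rewrite leq_add2l.
- by case/mem_witness_list => P [ch [_ ->]]; exact: witness_vanish.
- case/mem_witness_list => P [ch [ch_in ->]]; case: n => g j.
  exact: moment_witness_neq1 (size_chunk_le ch_in).
split => [Zgj | [y /mem_witness_list[P [ch [ch_in ->]]]]].
  have j_fibre : j \in fibre g by rewrite inE; apply/asboolP.
  have : g \in fibre_class (fibre g) by rewrite mem_enum inE.
  rewrite (@mem_chunks _ r _ g r_gt0) => /hasP[ch ch_in g_ch].
  exists (witness (fibre g) ch); last exact/(moment_witness_gt1 _ _ _ (size_chunk_le ch_in)).
  apply/flatten_mapP; exists (fibre g); last exact: map_f.
  by rewrite mem_enum !inE; apply/set0Pn; exists j.
case/(moment_witness_gt1 _ _ _ (size_chunk_le ch_in)) => g_ch j_P.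
have : g \in fibre_class P by rewrite (@mem_chunks _ r _ g r_gt0); apply/hasP; exists ch.
by rewrite mem_enum inE => /eqP fibre_g; move: j_P; rewrite -fibre_g inE => /asboolP.
Qed.

End WitnessList.
End MomentFamily.

Lemma vcdim_hyperplanes_ge_moment d k r q L : (k <= d)%N -> (0 < r)%N ->
  (q + (2 ^ L).-1 <= k)%N -> (2 * r + 1 + L + (q + (2 ^ L).-1) <= d)%N ->
  vcdim_hyperplanes_ge d k (r * q * L)%N%:R.
Proof.
move=> k_le_d r_gt0 count_le_k count_le_d.
have blocks_le_d : (2 * r + 1 + L <= d)%N by lia.
rewrite (_ : (r * q * L)%N = #|{: 'I_(r * q) * 'I_L}|); last by rewrite card_prod !card_ord.
apply: (vcdim_hyperplanes_ge_of_witnesses (D := (2 * r + 1 + L)%N)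
  (U := @moment_normal d r L (r * q))) => //.
- exact: moment_normal_ge0.
- exact: moment_normal_vanish.
- exact: moment_normal_neq0 blocks_le_d.
- by move=> Z; exists (witness_list d r Z); apply: witness_list_witnesses; rewrite ?mulKn.
Qed.

Lemma vcdim_hyperplanes_ge_one d k : (2 <= d)%N -> (1 <= k <= d)%N ->
  vcdim_hyperplanes_ge d k 1.
Proof.
move=> d_ge2 /andP[k_ge1 k_le_d].
have e0_vanish (t : 'I_d) : (1 <= t)%N -> ev d 0 0 t = 0.
  by rewrite mxE; case: eqP => //; lia.
have e0_dot2 : dotv (ev d 0) (ev d 0 + ev d 0) = 2 by rewrite dotvDr dotv_evv //; lia.
rewrite (_ : 1 = #|'I_1|%:R); last by rewrite card_ord.
apply: (vcdim_hyperplanes_ge_of_witnesses (D := 1%N)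
  (U := fun _ : 'I_1 => ev d 0)) => //.
- by move=> n t; rewrite mxE ler0n.
- move=> n; apply/eqP => /matrixP/(_ 0 (Ordinal (ltnW d_ge2))).
  by rewrite !mxE /= => /eqP; rewrite oner_eq0.
move=> Z; case: (pselect (Z ord0)) => [Z0 | notZ0].
  exists [:: ev d 0 + ev d 0]; split => //=.
  - by move=> y; rewrite inE => /eqP -> t t_gt0; rewrite mxE !e0_vanish ?addr0.
  - by move=> y n; rewrite inE => /eqP ->; rewrite e0_dot2; apply/eqP; lra.
  - move=> n; rewrite (ord1 n); split => // _.
    by exists (ev d 0 + ev d 0); rewrite ?inE ?e0_dot2 ?ltr1n.
exists [::]; split => //=; first lia.
by move=> n; rewrite (ord1 n); split => // -[].
Qed.

Lemma log2_nat_ge0 k : (0 < k)%N -> 0 <= log2 k%:R.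
Proof. by move=> k_gt0; rewrite /log2 divr_ge0 ?ln_ge0 ?ler1n // ln_ge0 // ler1n. Qed.

Lemma log2_nat_lt k n : (0 < k)%N -> (k < 2 ^ n)%N -> log2 k%:R < n%:R.
Proof.
move=> k_gt0 k_lt; have ln2_gt0 : 0 < ln (2 : R) by rewrite ln_gt0 // ltr1n.
rewrite /log2 ltr_pdivrMr // mulr_natl -lnXn ?ltr0n //.
by rewrite ltr_ln ?posrE ?ltr0n ?exprn_gt0 // -natrX ltr_nat.
Qed.

Lemma ler_pM3 (c a b e A B E : R) : 0 <= c -> 0 <= a <= A -> 0 <= b <= B -> 0 <= e <= E ->
  c * a * b * e <= c * A * B * E.
Proof.
move=> c_ge0 /andP[a_ge0 aA] /andP[b_ge0 bB] /andP[e_ge0 eE].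
by rewrite -!mulrA ler_wpM2l // ler_pM ?mulr_ge0 // ler_pM.
Qed.

Lemma moment_parameters d k : (16 <= d)%N -> (2 <= k <= d)%N ->
  exists r q L, [/\ (0 < r)%N, (q + (2 ^ L).-1 <= k)%N,
    (2 * r + 1 + L + (q + (2 ^ L).-1) <= d)%N &
    [/\ (d <= 16 * r)%N, (k <= 8 * q)%N & (k < 2 ^ (4 * L))%N]].
Proof.
move=> d_ge16 /andP[k_ge2 k_le_d].
set q := maxn 1 (k %/ 4)%N; set L := maxn 1 (trunc_log 2 q).
exists (d %/ 8)%N, q, L.
have L_gt0 : (0 < L)%N by rewrite leq_max.
have L_lt : (L < 2 ^ L)%N := ltn_expl L (isT : (1 < 2)%N).
have exp_le : (8 * 2 ^ L <= 2 ^ (4 * L))%N.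
  by rewrite (_ : 8 = 2 ^ 3)%N // -expnD leq_pexp2l //; lia.
have [k_lt8 | k_ge8] := ltnP k 8.
  have q1 : q = 1%N by rewrite /q; lia.
  have L1 : L = 1%N by rewrite /L q1 trunc_log1.
  by rewrite L1 q1 /=; split; [lia | lia | lia | split; lia].
have q_ge2 : (1 < q)%N by rewrite /q; lia.
have L_eq : L = trunc_log 2 q by rewrite /L; apply/maxn_idPr; rewrite trunc_log_gt0.
have q_ge : (2 ^ L <= q)%N by rewrite L_eq; apply: trunc_logP; lia.
have q_lt : (q < 2 ^ L.+1)%N by rewrite L_eq; apply: trunc_log_ltn.
move: q_lt; rewrite expnS => q_lt.
by split; [lia | lia | lia | split; lia].
Qed.
Lemma dklogk_le_small d k : (d < 16)%N -> (1 <= k <= d)%N ->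
  1024%:R^-1 * d%:R * k%:R * log2 k%:R <= 1 :> R.
Proof.
move=> d_lt16 /andP[k_ge1 k_le_d].
have log_le : log2 k%:R <= 4%:R.
  by apply/ltW/log2_nat_lt => //; exact: leq_ltn_trans k_le_d _.
apply: le_trans (@ler_pM3 _ _ _ _ 15%:R 15%:R 4%:R _ _ _ _) _.
- by rewrite invr_ge0 ler0n.
- by rewrite ler0n ler_nat; lia.
- by rewrite ler0n ler_nat; lia.
- by rewrite log2_nat_ge0 ?log_le.
by rewrite -!mulrA -!natrM mulrC ler_pdivrMr ?ltr0n // mul1r ler_nat.
Qed.

Lemma dklogk_le_moment d k r q L : (0 < k)%N ->
  (d <= 16 * r)%N -> (k <= 8 * q)%N -> (k < 2 ^ (4 * L))%N ->
  1024%:R^-1 * d%:R * k%:R * log2 k%:R <= (r * q * L)%N%:R :> R.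
Proof.
move=> k_gt0 d_le k_le k_lt; set c : R := 1024%:R^-1.
apply: le_trans (@ler_pM3 c _ _ _ (16 * r)%N%:R (8 * q)%N%:R (4 * L)%N%:R _ _ _ _) _.
- by rewrite invr_ge0 ler0n.
- by rewrite ler0n ler_nat.
- by rewrite ler0n ler_nat.
- by rewrite log2_nat_ge0 //; apply/ltW/log2_nat_lt.
rewrite !natrM (_ : _ * _ * _ = c * 512 * (r%:R * q%:R * L%:R)); last by ring.
apply: ler_piMl; first by rewrite !mulr_ge0 ?ler0n.
by rewrite /c mulrC ler_pdivrMr ?ltr0n // mul1r ler_nat.
Qed.

Lemma vcdim_hyperplanes_ge_dklogk d k : (4 <= d)%N -> (1 <= k <= d)%N ->
  vcdim_hyperplanes_ge d k (1024%:R^-1 * d%:R * k%:R * log2 k%:R).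
Proof.
move=> d_ge4 k_range; have /andP[k_ge1 k_le_d] := k_range.
have d_ge2 : (2 <= d)%N by lia.
have [k_lt2 | k_ge2] := ltnP k 2.
  apply: vcdim_hyperplanes_ge_le (vcdim_hyperplanes_ge_one d_ge2 k_range).
  by rewrite (_ : k = 1%N) 1?/log2 ?mulr1n ?ln1 ?mul0r ?mulr0 ?ler01 //; lia.
have [d_lt16 | d_ge16] := ltnP d 16.
  apply: vcdim_hyperplanes_ge_le (vcdim_hyperplanes_ge_one d_ge2 k_range).
  exact: dklogk_le_small.
have [r [q [L [r_gt0 count_le_k count_le_d [d_le k_le k_lt]]]]] :=
  moment_parameters d_ge16 (introT andP (conj k_ge2 k_le_d)).
apply: vcdim_hyperplanes_ge_le (vcdim_hyperplanes_ge_moment k_le_d r_gt0 count_le_k count_le_d).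
exact: dklogk_le_moment.
Qed.

Theorem theorem3 : exists c : R, 0 < c /\
  forall d k : nat, (4 <= d)%N -> (1 <= k <= d)%N ->
  exists H : set (set 'rV[R]_d),
    (forall h, H h -> is_hyperplane h) /\
    vcdim_ge H (Delta k H) (c * d%:R * k%:R * log2 k%:R).
Proof.
exists 1024%:R^-1; split; first by rewrite invr_gt0 ltr0n.
exact: vcdim_hyperplanes_ge_dklogk.
Qed.
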